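(* Let $V$ be a real vector space and $C$ a cone in $V$. Suppose $X$ is a decomposably $C$-antichain-convex subset of $V$. (1) If $X$ is $C$-upward, then $X$ is convex. (2) If $X$ is $C$-downward, then $X$ is convex.
   Context: A cone in $V$ is a subset $C$ with $\lambda C\subseteq C$ for all $\lambda>0$ (possibly empty, need not contain $0$). $S\subseteq V$ is $C$-antichain-convex iff for all $x,y\in S$ and $\lambda\in[0,1]$ with $y-x\notin C\cup(-C)$ one has $\lambda x+(1-\lambda)y\in S$. $S$ is decomposably $C$-antichain-convex iff $S=S_1+\dots+S_n$ (Minkowski sum) for finitely many $C$-antichain-convex $S_i\subseteq V$. $S$ is $C$-upward iff $S+C\subseteq S$ (i.e., $x\in S$, $y-x\in C$ imply $y\in S$); $S$ is $C$-downward iff $S-C\subseteq S$. *)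

From mathcomp Require Import all_boot all_order all_algebra.
From mathcomp Require Import reals.
Set Implicit Arguments. Unset Strict Implicit. Unset Printing Implicit Defensive.
Import Order.TTheory GRing.Theory Num.Theory.
Local Open Scope ring_scope.

Section Defs.
Variables (R : realType) (V : lmodType R).

(* a cone: closed under multiplication by positive scalars (may be empty, need not contain 0) *)
Definition is_cone (C : V -> Prop) : Prop :=
  forall (l : R) (x : V), 0 < l -> C x -> C (l *: x).

Definition antichain_convex (C S : V -> Prop) : Prop :=
  forall (x y : V) (l : R), S x -> S y -> 0 <= l <= 1 ->
    ~ (C (y - x) \/ C (- (y - x))) -> S (l *: x + (1 - l) *: y).

Definition minkowski_sum (n : nat) (Ss : 'I_n -> V -> Prop) : V -> Prop :=
  fun x => exists f : 'I_n -> V, (forall i, Ss i (f i)) /\ x = \sum_(i < n) f i.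

Definition decomp_antichain_convex (C S : V -> Prop) : Prop :=
  exists (n : nat) (Ss : 'I_n -> V -> Prop),
    (forall i, antichain_convex C (Ss i)) /\
    (forall x, S x <-> minkowski_sum Ss x).

Definition upward (C S : V -> Prop) : Prop :=
  forall x y : V, S x -> C (y - x) -> S y.

Definition downward (C S : V -> Prop) : Prop :=
  forall x y : V, S x -> C (x - y) -> S y.

Definition convex_set (S : V -> Prop) : Prop :=
  forall (x y : V) (l : R), S x -> S y -> 0 <= l <= 1 -> S (l *: x + (1 - l) *: y).

End Defs.

From mathcomp Require Import all_boot all_order all_algebra.
From mathcomp Require Import boolp reals.
Set Implicit Arguments. Unset Strict Implicit. Unset Printing Implicit Defensive.
Import Order.TTheory GRing.Theory Num.Theory.
Local Open Scope ring_scope.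

(* Write x = sum x_i and y = sum y_i with x_i, y_i in S_i, and z_i for the
   convex combination of x_i and y_i.  If x_i and y_i are incomparable then
   z_i lies in S_i; if y_i - x_i lies in C (resp. -C) then z_i is x_i (resp. y_i)
   plus a point of C u {0}.  So the convex combination of x and y is a point of
   S_1 + ... + S_n = X plus finitely many points of C u {0}, and an upward set
   absorbs them one at a time.  The downward case is the upward case for -C. *)

Section AntichainConvex.
Variables (R : realType) (V : lmodType R).
Implicit Types (C S X : V -> Prop) (x y : V) (l : R).

Definition pointed_cone C : V -> Prop := fun v => v = 0 \/ C v.

Definition opp_cone C : V -> Prop := fun v => C (- v).

Lemma segment_subr l (a b : V) : l *: a + (1 - l) *: b - b = l *: (a - b).
Proof. by rewrite scalerBr scalerBl scale1r addrCA addrAC subrr add0r. Qed.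

Lemma segment_subl l (a b : V) : l *: a + (1 - l) *: b - a = (1 - l) *: (b - a).
Proof. by rewrite -segment_subr subKr [l *: a + _]addrC. Qed.

Lemma pointed_coneZ C l v : is_cone C -> 0 <= l -> C v -> pointed_cone C (l *: v).
Proof.
move=> coneC; rewrite le_eqVlt => /orP[/eqP <- _|l_gt0 Cv]; first by rewrite scale0r; left.
by right; apply: coneC.
Qed.

Lemma antichain_convex_segment_above C S x y l :
  is_cone C -> antichain_convex C S -> S x -> S y -> 0 <= l <= 1 ->
  exists2 u, S u & pointed_cone C (l *: x + (1 - l) *: y - u).
Proof.
move=> coneC convS Sx Sy /andP[l_ge0 l_le1].
have [[Cyx|Cxy]|incomparable] := pselect (C (y - x) \/ C (- (y - x))).
- exists x => //; rewrite segment_subl; apply: pointed_coneZ => //.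
  by rewrite subr_ge0.
- by exists y => //; rewrite segment_subr; apply: pointed_coneZ; rewrite // -opprB.
- by exists (l *: x + (1 - l) *: y); [apply: convS; rewrite ?l_ge0 | left; rewrite subrr].
Qed.

Lemma upward_addr_sum C X (I : Type) (r : seq I) (d : I -> V) x :
  upward C X -> X x -> (forall i, pointed_cone C (d i)) -> X (x + \sum_(i <- r) d i).
Proof.
move=> upX Xx Cd; apply: (big_rec (fun s => X (x + s))); first by rewrite addr0.
move=> i s _ Xxs; rewrite addrCA.
have [->|Cdi] := Cd i; first by rewrite add0r.
by apply: (upX _ _ Xxs); rewrite addrK.
Qed.

Lemma decomp_antichain_convex_upward_convex C X :
  is_cone C -> decomp_antichain_convex C X -> upward C X -> convex_set X.
Proof.
move=> coneC [n [Ss [convS defX]]] upX x y l /defX[fx [Sfx ->]] /defX[fy [Sfy ->]] l01.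
pose z i := l *: fx i + (1 - l) *: fy i.
have near_z i : exists ui, Ss i ui /\ pointed_cone C (z i - ui).
  have [ui Sui Cui] := antichain_convex_segment_above coneC (convS i) (Sfx i) (Sfy i) l01.
  by exists ui.
have [u Su] := fin_all_exists near_z.
have -> : l *: \sum_i fx i + (1 - l) *: \sum_i fy i = \sum_i u i + \sum_i (z i - u i).
  rewrite !scaler_sumr -!big_split; apply: eq_bigr => i _ /=.
  by rewrite [u i + _]addrC subrK.
have Xu : X (\sum_i u i) by apply/defX; exists u; split=> // i; case: (Su i).
by apply: (upward_addr_sum _ upX Xu) => i; case: (Su i).
Qed.

Lemma is_cone_opp C : is_cone C -> is_cone (opp_cone C).
Proof. by move=> coneC l v l_gt0 Cv; rewrite /opp_cone -scalerN; apply: coneC. Qed.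

Lemma antichain_convex_opp C S : antichain_convex C S -> antichain_convex (opp_cone C) S.
Proof.
move=> convS x y l Sx Sy l01 incomparable; apply: convS => // comparable.
by apply: incomparable; rewrite /opp_cone opprK; case: comparable; [right | left].
Qed.

Lemma decomp_antichain_convex_opp C X :
  decomp_antichain_convex C X -> decomp_antichain_convex (opp_cone C) X.
Proof.
move=> [n [Ss [convS defX]]]; exists n, Ss; split=> // i.
exact: antichain_convex_opp.
Qed.

Lemma downward_upward_opp C X : downward C X -> upward (opp_cone C) X.
Proof. by move=> downX x y Xx; rewrite /opp_cone opprB; apply: downX. Qed.

End AntichainConvex.

Theorem theorem2 (R : realType) (V : lmodType R) (C X : V -> Prop) :
  is_cone C -> decomp_antichain_convex C X ->
  (upward C X -> convex_set X) /\ (downward C X -> convex_set X).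
Proof.
move=> coneC decX; split=> [upX|downX].
  exact: decomp_antichain_convex_upward_convex decX upX.
apply: (decomp_antichain_convex_upward_convex (is_cone_opp coneC)).
  exact: decomp_antichain_convex_opp.
exact: downward_upward_opp.
Qed.
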